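(* Let $\mathcal{F}$ be a projective Fraïssé family of finite trees whose distinguished epimorphisms are monotone and weakly coherent, and which allows splitting edges. Let $(F_i)_{i<\omega}$ be a Fraïssé sequence for $\mathcal{F}$ and $\mathbb{F}=\varprojlim F_i\subseteq\prod_i F_i$ its projective Fraïssé limit. Let $e=(e_n)_{n\in\mathbb{N}}\in\mathbb{F}$. If there is $N$ such that $e_m$ is an endpoint of $F_m$ for every $m\ge N$, then $e$ is an endpoint of $\mathbb{F}$.
   Context: Graphs have reflexive symmetric edge relations; topological graphs carry a compact, Hausdorff, zero-dimensional, second countable topology with closed edge set; finite graphs are discrete. An epimorphism $g\colon B\to A$ is a continuous surjection with $\langle a_1,a_2\rangle\in E(A)$ iff some $b_i\in g^{-1}(a_i)$ satisfy $\langle b_1,b_2\rangle\in E(B)$. A topological graph is disconnected if its vertex set splits into two nonempty disjoint closed sets with no edges between, connected otherwise (subsets carry induced edges and subspace topology). Monotone: every fibre is connected. An arc is a connected topological graph such that removing any vertex except at most two (its endpoints) disconnects it. An embedding is an injective continuous map that is a homeomorphism onto its image and preserves and reflects edges. A vertex $x$ of a topological graph $G$ is an endpoint of $G$ if whenever $H$ is an arc and $f\colon H\to G$ an embedding with $x$ in the image, $x$ is the image of an endpoint of $H$ (for a finite tree these are the vertices with at most one neighbour). In a finite tree, $\mathrm{ord}(a)$ is the number of neighbours other than $a$. For monotone $f\colon B\to A$ of finite trees, $a\in A$ with $\mathrm{ord}(a)=n\ge3$ is a point of weak coherence if some $b\in f^{-1}(a)$ with $\mathrm{ord}(b)=m\ge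 n$ and an injection $p\colon n\to m$ satisfy $f^{-1}(A_i)\subseteq B_{p(i)}$ ($A_i$, $B_j$ the components of $A\setminus\{a\}$, $B\setminus\{b\}$); $f$ is weakly coherent if this holds at every vertex of order $\ge3$. A projective Fraïssé family: class of finite graphs with distinguished epimorphisms, countably many up to isomorphism, containing identities, closed under composition, with joint projection and projective amalgamation. A Fraïssé sequence: compatible distinguished epimorphisms $f^m_n\colon F_m\to F_n$ such that each member is the image of some $F_n$, and every distinguished $f\colon A\to F_m$ satisfies $f\circ g=f^n_m$ for some $n\ge m$ and distinguished $g\colon F_n\to A$; the limit is the inverse limit with coordinatewise edges. Allowing splitting edges: for each member $G$ and nontrivial edge $\{a,b\}$, replacing it by a path $a,\ast,b$ with a new vertex yields a member, and the two maps collapsing $\ast$ to $a$, resp. $b$, are distinguished. *)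

From HB Require Import structures.
From mathcomp Require Import all_boot all_order all_algebra.
From mathcomp Require Import all_classical all_reals.
From mathcomp Require Import topology.
Set Implicit Arguments. Unset Strict Implicit. Unset Printing Implicit Defensive.
Record FinGraph := {
  gV :> finType;
  gE : rel gV;
  gE_refl : reflexive gE;
  gE_sym : symmetric gE }.

Definition giso (A B : FinGraph) : Prop :=
  exists g : A -> B, bijective g /\ forall x y, gE (g x) (g y) = gE x y.

(* epimorphism g : B -> A (continuity is automatic for discrete graphs) *)
Definition gepi (A B : FinGraph) (g : B -> A) : Prop :=
  (forall a, exists b, g b = a) /\
  (forall a1 a2, gE a1 a2 <-> exists b1 b2, [/\ g b1 = a1, g b2 = a2 & gE b1 b2]).

Definition gconnected (G : FinGraph) (S : {set G}) : Prop :=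
  forall X Y : {set G}, X :|: Y = S -> [disjoint X & Y] -> X != finset.set0 -> Y != finset.set0 ->
    exists x y, [/\ x \in X, y \in Y & gE x y].

Definition is_tree (G : FinGraph) : Prop :=
  [/\ 0 < #|G|, gconnected [set: G] &
      ~ exists s : seq G, [/\ uniq s, 3 <= size s & cycle (gE (f:=G)) s]].

Definition gord (G : FinGraph) (a : G) : nat := #|[set b | gE a b & b != a]|.

Definition comps (G : FinGraph) (a : G) : {set {set G}} :=
  [set [set y | connect (fun u v => [&& u != a, v != a & gE u v]) x y] | x in [set~ a]].

Definition gmonotone (A B : FinGraph) (g : B -> A) : Prop :=
  forall a, gconnected [set b | g b == a].

Definition point_weak_coherence (A B : FinGraph) (g : B -> A) (a : A) : Prop :=
  exists b : B, [/\ g b = a, gord a <= gord b &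
    exists p : {set A} -> {set B}, {in comps a &, injective p} /\
      forall C, C \in comps a -> p C \in comps b /\ g @^-1: C \subset p C].

Definition weakly_coherent (A B : FinGraph) (g : B -> A) : Prop :=
  forall a : A, 3 <= gord a -> point_weak_coherence g a.

Definition dist_t := forall A B : FinGraph, (B -> A) -> Prop.

Definition proj_fraisse_family (member : FinGraph -> Prop) (dist : dist_t) : Prop :=
  (forall A B g, dist A B g -> [/\ member A, member B & gepi g]) /\
  [/\ (exists en : nat -> FinGraph, forall A, member A -> exists n, giso (en n) A),
      (forall A, member A -> dist A A id),
      (forall (A B C : FinGraph) (g : B -> A) (h : C -> B), dist A B g -> dist B C h ->
          dist A C (g \o h)),
      (forall A B, member A -> member B ->
          exists (C : FinGraph) (g : C -> A) (h : C -> B), dist A C g /\ dist B C h) &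
      (forall (A B C : FinGraph) (g : B -> A) (h : C -> A), dist A B g -> dist A C h ->
          exists (D : FinGraph) (g' : D -> B) (h' : D -> C),
            [/\ dist B D g', dist C D h' & g \o g' =1 h \o h'])].

(* Splitting the edge {a,b}: new vertex None, path a - None - b. *)
Definition split_rel (G : FinGraph) (a b : G) : rel (option G) :=
  fun u v => match u, v with
  | Some x, Some y =>
      (x == y) || (gE x y && ~~ (((x == a) && (y == b)) || ((x == b) && (y == a))))
  | None, None => true
  | None, Some y => (y == a) || (y == b)
  | Some y, None => (y == a) || (y == b)
  end.

Lemma split_rel_refl (G : FinGraph) (a b : G) : reflexive (split_rel a b).
Proof. by case=> [x|] //=; rewrite eqxx. Qed.

Lemma split_rel_sym (G : FinGraph) (a b : G) : symmetric (split_rel a b).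
Proof.
case=> [x|] [y|] //=; rewrite (eq_sym x y) gE_sym.
by case: (x == a); case: (y == b); case: (x == b); case: (y == a).
Qed.

Definition split_graph (G : FinGraph) (a b : G) : FinGraph :=
  {| gV := option G; gE := split_rel a b;
     gE_refl := @split_rel_refl G a b; gE_sym := @split_rel_sym G a b |}.

Definition allows_splitting (member : FinGraph -> Prop) (dist : dist_t) : Prop :=
  forall (G : FinGraph) (a b : G), member G -> a != b -> gE a b ->
    [/\ member (split_graph a b),
        dist G (split_graph a b) (fun o => odflt a o) &
        dist G (split_graph a b) (fun o => odflt b o)].

(* f^{k+m}_m is the composite [bond f m k].                                    *)
Fixpoint bond (F : nat -> FinGraph) (f : forall n, F n.+1 -> F n) (m k : nat)
  : F (k + m) -> F m :=
  match k return F (k + m) -> F m with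
  | 0 => fun x => x
  | k'.+1 => fun x => @bond F f m k' (f (k' + m) x)
  end.

Definition fraisse_sequence (member : FinGraph -> Prop) (dist : dist_t)
  (F : nat -> FinGraph) (f : forall n, F n.+1 -> F n) : Prop :=
  [/\ (forall n, dist (F n) (F n.+1) (f n)),
      (forall A, member A -> exists n (g : F n -> A), dist A (F n) g) &
      (forall (A : FinGraph) m (h : A -> F m), dist (F m) A h ->
          exists k (g : F (k + m) -> A), dist A (F (k + m)) g /\ h \o g =1 @bond F f m k)].

Local Open Scope classical_set_scope.
Definition top_graph (T : topologicalType) (E : T -> T -> Prop) : Prop :=
  [/\ (forall x, E x x) /\ (forall x y, E x y -> E y x),
      compact [set: T] /\ hausdorff_space T,
      zero_dimensional T, @second_countable T & closed [set p : T * T | E p.1 p.2]].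

(* A subset S (induced edges, subspace topology) is connected. *)
Definition tconnected (T : topologicalType) (E : T -> T -> Prop) (S : set T) : Prop :=
  ~ exists A B : set T,
      [/\ A `|` B = S, A `&` B = set0, A !=set0 & B !=set0] /\
      [/\ (exists C, closed C /\ A = S `&` C),
          (exists C, closed C /\ B = S `&` C) &
          (forall x y, A x -> B y -> ~ E x y)].

Definition is_arc (T : topologicalType) (E : T -> T -> Prop) : Prop :=
  [/\ top_graph E, tconnected E setT &
      exists p q : T, forall v, v <> p -> v <> q -> ~ tconnected E (~` [set v])].

Definition arc_endpoint (T : topologicalType) (E : T -> T -> Prop) (p : T) : Prop :=
  tconnected E (~` [set p]).

Definition tembedding (T U : topologicalType) (ET : T -> T -> Prop)
  (EU : U -> U -> Prop) (g : T -> U) : Prop :=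
  [/\ injective g, continuous g,
      (forall A : set T, open A -> exists V : set U, open V /\ g @` A = g @` setT `&` V) &
      (forall x y, EU (g x) (g y) <-> ET x y)].

Definition tg_endpoint (G : topologicalType) (E : G -> G -> Prop) (x : G) : Prop :=
  forall (H : topologicalType) (EH : H -> H -> Prop) (g : H -> G),
    is_arc EH -> tembedding EH E g -> (exists h, g h = x) ->
    exists h, arc_endpoint EH h /\ g h = x.

Definition dgraph (G : FinGraph) : topologicalType := discrete_topology (gV G).
Definition dedge (G : FinGraph) : dgraph G -> dgraph G -> Prop := fun x y => gE (f:=G) x y.

Definition lim_prod (F : nat -> FinGraph) : topologicalType :=
  prod_topology (fun n => dgraph (F n)).

Definition lim_set (F : nat -> FinGraph) (f : forall n, F n.+1 -> F n) : set (lim_prod F) :=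
  [set x | forall n, f n (x n.+1) = x n].

Definition flimit (F : nat -> FinGraph) (f : forall n, F n.+1 -> F n) : topologicalType :=
  set_type (lim_set f).

Definition lim_edge (F : nat -> FinGraph) (f : forall n, F n.+1 -> F n)
  : flimit f -> flimit f -> Prop :=
  fun x y => forall n, gE (f:=F n) (set_val x n) (set_val y n).

From HB Require Import structures.
From mathcomp Require Import all_boot all_order all_algebra.
From mathcomp Require Import all_classical all_reals.
From mathcomp Require Import topology.
Set Implicit Arguments. Unset Strict Implicit. Unset Printing Implicit Defensive.

(* Suppose an arc H is embedded in the limit by g, with g h0 = e, and H \ {h0}
   splits into two pieces A and B.  Choose a level m >= N at which a point of A
   and a point of B both project away from e_m.  The points of H projecting to
   e_m form a clopen set W containing h0, so connectedness of H yields edges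
   x - z and y - z' from A \ W and B \ W into W.  As e_m is an endpoint of the
   tree F_m, it has only one neighbour, so x and y agree at level m.  At every
   later level their coordinates lie in one fibre of the bonding map and are
   adjacent to the fibre over e_m; fibres are connected (monotonicity) and a
   tree has at most one edge between two disjoint connected sets, so x and y
   agree at every level: x = y lies in both A and B. *)

Definition acyclic (G : FinGraph) : Prop :=
  ~ exists s : seq G, [/\ uniq s, 3 <= size s & cycle (gE (f:=G)) s].

Section FiniteGraphs.
Variable G : FinGraph.

Definition gE_in (P : {set G}) : rel G := fun u v => [&& u \in P, v \in P & gE u v].

Lemma gconnected_connect (P : {set G}) p q :
  gconnected P -> p \in P -> q \in P -> connect (gE_in P) p q.
Proof.
move=> HP pP qP; apply: contrapT => npq.
pose X := [set y in P | connect (gE_in P) p y].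
have [||||x [y [xX]]] := HP X (P :\: X).
- by apply/setP => y; rewrite !inE; case: (y \in P); case: connect.
- by rewrite -setI_eq0; apply/eqP/setP => y; rewrite !inE; case: (y \in P); case: connect.
- by apply/set0Pn; exists p; rewrite inE pP connect0.
- by apply/set0Pn; exists q; rewrite !inE qP andbT; apply/negP => /andP[_ /npq].
rewrite !inE => /andP[yX yP] Exy; move: xX; rewrite inE => /andP[xP px].
move: yX; rewrite yP /= => /negP; apply.
by apply: connect_trans px (connect1 _); rewrite /gE_in xP yP.
Qed.

Lemma path_gE_in_all (P : {set G}) x s : path (gE_in P) x s -> all (mem P) s.
Proof. by elim: s x => //= y s IH x /andP[/and3P[_ -> _] /IH]. Qed.

Lemma path_gE_in_gE (P : {set G}) x s : path (gE_in P) x s -> path (gE (f:=G)) x s.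
Proof. by apply: sub_path => u v /and3P[]. Qed.

(* Two such edges would close a cycle through shortest paths inside P and Q. *)
Lemma acyclic_connected_edge_uniq (P Q : {set G}) p1 p2 q1 q2 :
  acyclic G -> gconnected P -> gconnected Q -> [disjoint P & Q] ->
  p1 \in P -> p2 \in P -> q1 \in Q -> q2 \in Q -> gE p1 q1 -> gE p2 q2 -> p1 = p2.
Proof.
move=> Hnc HP HQ dPQ p1P p2P q1Q q2Q E1 E2; apply: contrapT => p12.
have /connectP [s Hs Hl] := gconnected_connect HP p1P p2P.
have /connectP [t Ht Htl] := gconnected_connect HQ q2Q q1Q.
case/shortenP: Hs Hl => {}s Hs Hus _ Hl.
case/shortenP: Ht Htl => {}t Ht Hut _ Htl.
apply: Hnc; exists ((p1 :: s) ++ (q2 :: t)); split.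
- rewrite cat_uniq Hus Hut andbT; apply/hasPn => y yt; apply/negP => ys.
  have /allP sP : all (mem P) (p1 :: s) by rewrite /= p1P (path_gE_in_all Hs).
  have /allP tQ : all (mem Q) (q2 :: t) by rewrite /= q2Q (path_gE_in_all Ht).
  have [yP yQ] : y \in P /\ y \in Q by split; [apply: sP | apply: tQ].
  by move/disjointFr: dPQ => /(_ y yP); rewrite yQ.
- rewrite size_cat /= addnS ltnS; case: s Hs Hus Hl => [|z s] //=.
  by move=> _ _ Hl; rewrite Hl in p12.
- rewrite /= rcons_cat rcons_cons cat_path (path_gE_in_gE Hs) /= -Hl E2 /=.
  by rewrite rcons_path (path_gE_in_gE Ht) /= -Htl gE_sym.
Qed.

Lemma monotone_fibre_edge_uniq (A : FinGraph) (g : G -> A) (u w : A) p1 p2 q1 q2 :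
  acyclic G -> gmonotone g -> u != w -> g p1 = u -> g p2 = u -> g q1 = w -> g q2 = w ->
  gE p1 q1 -> gE p2 q2 -> p1 = p2.
Proof.
move=> Hnc Hm uw gp1 gp2 gq1 gq2.
apply: (acyclic_connected_edge_uniq Hnc (Hm u) (Hm w)); rewrite ?inE ?gp1 ?gp2 ?gq1 ?gq2 //.
rewrite -setI_eq0; apply/eqP/setP => p; rewrite !inE.
by apply/negP => /andP[/eqP -> /eqP hw]; move: uw; rewrite hw eqxx.
Qed.

End FiniteGraphs.

Local Open Scope classical_set_scope.

Section TopologicalGraphs.
Variables (T : topologicalType) (E : T -> T -> Prop).

Definition tseparation (S A B : set T) : Prop :=
  [/\ A `|` B = S, A `&` B = set0, A !=set0 & B !=set0] /\
  [/\ (exists C, closed C /\ A = S `&` C), (exists C, closed C /\ B = S `&` C) &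
      (forall x y, A x -> B y -> ~ E x y)].

Lemma tconnectedP (S : set T) : tconnected E S <-> ~ exists A B, tseparation S A B.
Proof. by []. Qed.

Lemma tseparation_sym (S A B : set T) :
  (forall x y, E x y -> E y x) -> tseparation S A B -> tseparation S B A.
Proof.
move=> Esym [[AB AB0 nA nB] [cA cB noE]]; split; split => //.
- by rewrite setUC.
- by rewrite setIC.
- by move=> x y Bx Ay /Esym; apply: noE.
Qed.

Lemma tseparation_subl (S A B : set T) : tseparation S A B -> A `<=` S.
Proof. by move=> [[<- _ _ _] _] x Ax; left. Qed.

Lemma tconnected_edge_across (U : set T) :
  tconnected E setT -> closed U -> closed (~` U) -> U !=set0 -> ~` U !=set0 ->
  exists x y, [/\ U x, ~ U y & E x y].
Proof.
move=> Hconn cU cUc nU nUc; apply: contrapT => Hno; apply: Hconn.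
exists U, (~` U); split; split => //.
- by rewrite setUv.
- by rewrite setICr.
- by exists U; rewrite setTI.
- by exists (~` U); rewrite setTI.
- by move=> x y Ux Uy Exy; apply: Hno; exists x, y.
Qed.

(* A `&` ~` W equals CA `&` ~` W (as W h0) and its complement equals W `|` CB, so
   both are closed; an edge leaving A `&` ~` W cannot end in B, so it ends in W. *)
Lemma tseparation_edge_into_clopen (h0 : T) (A B W : set T) a :
  tconnected E setT -> tseparation (~` [set h0]) A B -> open W -> closed W -> W h0 ->
  A a -> ~ W a -> exists x z, [/\ A x, ~ W x, W z & E x z].
Proof.
move=> Hconn sepAB oW cW Wh0 Aa nWa.
have [[AB AB0 _ _] [[CA [cCA AE]] [CB [cCB BE]] noE]] := sepAB.
have notW h : ~ W h -> A h \/ B h.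
  by move=> nWh; have : (A `|` B) h by rewrite AB => hh; apply: nWh; rewrite hh.
have nAB h : A h -> B h -> False by move=> Ah Bh; have : (A `&` B) h by []; rewrite AB0.
have [||||x [y [[Ax nWx] nAWy Exy]]] := tconnected_edge_across (U := A `&` ~` W) Hconn.
- have -> : A `&` ~` W = CA `&` ~` W.
    apply/seteqP; split => h [Ah nWh]; split => //; first by move: Ah; rewrite AE => -[].
    by rewrite AE; split => // hh; apply: nWh; rewrite hh.
  by apply: closedI cCA _; rewrite closedC.
- have -> : ~` (A `&` ~` W) = W `|` CB.
    apply/seteqP; split => h.
    + move=> nAWh; have [Wh|nWh] := pselect (W h); first by left.
      by case: (notW h nWh) => [Ah|]; [case: nAWh | rewrite BE => -[]; right].
    + case=> [Wh [_]|CBh [Ah nWh]] //; apply: (nAB h Ah); rewrite BE; split => //.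
      by move=> hh; apply: nWh; rewrite hh.
  exact: closedU.
- by exists a.
- by exists h0 => -[/(tseparation_subl sepAB)].
have [Wy|nWy] := pselect (W y); first by exists x, y.
case: (notW y nWy) => [Ay|By]; first by case: nAWy.
by case: (noE x y Ax By Exy).
Qed.

End TopologicalGraphs.

Lemma dgraph_top_graph (G : FinGraph) : top_graph (@dedge G).
Proof.
split.
- by split => [x|x y]; rewrite /dedge ?gE_refl // gE_sym.
- split; last exact: discrete_hausdorff.
  by apply: finite_compact; exact: (@finite_finset (gV G) setT).
- exact: discrete_zero_dimension.
- exists (range (fun x : dgraph G => [set x])).
    apply: card_le_trans (card_image_le _ _) _.
    exact: finite_set_countable (@finite_finset (gV G) setT).
  split; first by move=> _ [x _ <-]; exact: discrete_open.
  move=> x A /nbhs_singleton Ax.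
  by exists [set x]; [split => //; exists x | move=> y /= ->].
- rewrite -openC openE => p np; exists ([set p.1], [set p.2]).
    by split; exact: discrete_set1.
  by case=> a b [/= -> ->]; case: p np.
Qed.

Lemma dgraph_tembedding (G H : FinGraph) (g : G -> H) :
  injective g -> (forall x y, gE (g x) (g y) = gE x y) ->
  tembedding (@dedge G) (@dedge H) (g : dgraph G -> dgraph H).
Proof.
move=> ginj gE_g; split => //.
- by apply/continuousP => A _; exact: discrete_open.
- move=> A _; exists (g @` A); split; first exact: discrete_open.
  apply/seteqP; split => y; last by case.
  by move=> [a Aa <-]; split => //; exists a.
- by move=> x y; rewrite /dedge gE_g.
Qed.

Lemma discrete_fibre_clopen (T : topologicalType) (G : FinGraph) (h : T -> dgraph G) c :
  continuous h -> open [set x | h x = c] /\ closed [set x | h x = c].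
Proof.
move=> hcont; split.
  by apply: (@open_comp T (dgraph G) h [set c]) => [x _|]; [exact: hcont | exact: discrete_open].
apply: (@preimage_closed T (dgraph G) h [set c]) => [x _|]; first exact: hcont.
exact: discrete_closed.
Qed.

Definition path3_rel : rel 'I_3 := fun i j => (i <= j.+1)%N && (j <= i.+1)%N.
Lemma path3_refl : reflexive path3_rel. Proof. by move=> i; rewrite /path3_rel !leqnSn. Qed.
Lemma path3_sym : symmetric path3_rel. Proof. by move=> i j; rewrite /path3_rel andbC. Qed.
Definition path3 : FinGraph :=
  {| gV := 'I_3; gE := path3_rel; gE_refl := path3_refl; gE_sym := path3_sym |}.

Definition path3_mid : path3 := @Ordinal 3 1 isT.

Lemma path3_midE (i : path3) : i = path3_mid <-> val i = 1%N.
Proof. by split => [->//|h]; apply: val_inj. Qed.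

Lemma path3_mid_cut : ~ tconnected (@dedge path3) (~` [set path3_mid]).
Proof.
move=> /tconnectedP; apply.
exists [set i : dgraph path3 | val i = 0%N], [set i : dgraph path3 | val i = 2%N].
split; split.
- apply/seteqP; split => i /=.
  + by case=> h /path3_midE h'; rewrite h' in h.
  + by move/path3_midE; case: i => [[|[|[|k]]] Hk] //= _; [left|right].
- by apply/seteqP; split => [i [/= -> ]|i].
- by exists (@Ordinal 3 0 isT).
- by exists (@Ordinal 3 2 isT).
- exists [set i : dgraph path3 | val i = 0%N]; split; first exact: discrete_closed.
  apply/seteqP; split => i /=; last by case.
  by move=> h; split => // /path3_midE h'; rewrite h' in h.
- exists [set i : dgraph path3 | val i = 2%N]; split; first exact: discrete_closed.
  apply/seteqP; split => i /=; last by case.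
  by move=> h; split => // /path3_midE h'; rewrite h' in h.
- by case=> [[|[|[|?]]] ?] [[|[|[|?]]] ?].
Qed.

Lemma path3_connected : tconnected (@dedge path3) setT.
Proof.
apply/tconnectedP => -[A [B [[AB _ [a Aa] [b Bb]] [_ _ noE]]]].
have mid_adj (i : path3) : gE path3_mid i by case: i => [[|[|[|?]]] ?].
have : (A `|` B) path3_mid by rewrite AB.
case=> [Amid|Bmid]; first exact: noE Amid Bb (mid_adj b).
by apply: (noE a _ Aa Bmid); rewrite /dedge gE_sym.
Qed.

Lemma path3_arc : is_arc (@dedge path3).
Proof.
split; [exact: dgraph_top_graph | exact: path3_connected |].
exists (@Ordinal 3 0 isT), (@Ordinal 3 2 isT) => v h0 h2.
suff -> : v = path3_mid by exact: path3_mid_cut.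
apply/path3_midE; case: v h0 h2 => [[|[|[|?]]] ?] //= h0 h2; exfalso.
- by apply: h0; apply: val_inj.
- by apply: h2; apply: val_inj.
Qed.

(* Two distinct neighbours u, v of x span an embedded arc u - x - v with x inside. *)
Lemma endpoint_neighbour_uniq (G : FinGraph) (x u v : G) :
  acyclic G -> tg_endpoint (@dedge G) x -> gE x u -> gE x v -> u != x -> v != x -> u = v.
Proof.
move=> Hnc Hend Eu Ev ux vx; apply: contrapT => /eqP uv.
have nEuv : ~~ gE u v.
  apply/negP => Euv; apply: Hnc; exists [:: u; x; v]; split => //.
  + by rewrite /= !inE negb_or ux uv eq_sym vx.
  + by rewrite /= (gE_sym u x) Eu Ev gE_sym Euv.
pose g (i : path3) : G := match val i with 0 => u | 1 => x | _ => v end.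
have ginj : injective g.
  move=> [[|[|[|?]]] ?] [[|[|[|?]]] ?] //= h; apply: val_inj => //=;
  by move: h ux vx uv; rewrite /g /= => ->; rewrite ?eqxx.
have gE_g i j : gE (g i) (g j) = gE i j.
  by case: i j => [[|[|[|?]]] ?] [[|[|[|?]]] ?] //=;
    rewrite /g /= /path3_rel /= ?gE_refl ?(gE_sym u x) ?(gE_sym v x) ?(gE_sym v u) ?Eu ?Ev
      ?(negbTE nEuv).
have [|h [hend gh]] := Hend _ _ _ path3_arc (dgraph_tembedding ginj gE_g).
  by exists path3_mid.
suff hmid : h = path3_mid by apply: path3_mid_cut; rewrite -hmid.
apply/path3_midE; move: gh; rewrite /g.
by case: h {hend} => [[|[|[|?]]] ?] //= h; move: ux vx; rewrite h eqxx.
Qed.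

Section InverseLimit.
Variables (F : nat -> FinGraph) (f : forall n, F n.+1 -> F n).

Lemma flimit_coordS (x : flimit f) n : f (set_val x n.+1) = set_val x n.
Proof. exact: (set_valP x n). Qed.

Lemma flimit_coord_bond (x : flimit f) m k : @bond F f m k (set_val x (k + m)) = set_val x m.
Proof. by elim: k => [//|k IH] /=; rewrite flimit_coordS. Qed.

Lemma flimit_ext (x y : flimit f) : (forall n, set_val x n = set_val y n) -> x = y.
Proof. by move=> h; apply: val_inj; exact: functional_extensionality_dep h. Qed.

Lemma flimit_coord_eq_le (x y : flimit f) n k :
  set_val x n = set_val y n -> (k <= n)%N -> set_val x k = set_val y k.
Proof.
elim: n => [h|n IH h]; first by rewrite leqn0 => /eqP ->.
rewrite leq_eqVlt => /orP[/eqP -> //|]; rewrite ltnS; apply: IH.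
by rewrite -flimit_coordS h flimit_coordS.
Qed.

Lemma flimit_neq_coord (x y : flimit f) : x <> y -> exists n, set_val x n <> set_val y n.
Proof.
move=> xy; apply: contrapT => hxy; apply: xy; apply: flimit_ext => n.
by apply: contrapT => hn; apply: hxy; exists n.
Qed.

Lemma continuous_flimit_coord n : continuous (fun x : flimit f => (set_val x n : dgraph (F n))).
Proof.
move=> x; apply: (@continuous_comp (flimit f) (lim_prod F) (dgraph (F n)) set_val (fun p => p n)).
  exact: initial_continuous.
exact: proj_continuous.
Qed.

Hypothesis F_acyclic : forall n, acyclic (F n).
Hypothesis bond_monotone : forall m j, gmonotone (@bond F f m j).

Lemma flimit_edge_fibre_uniq (x y z z' : flimit f) m :
  lim_edge x z -> lim_edge y z' -> set_val z m = set_val z' m ->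
  set_val x m = set_val y m -> set_val x m != set_val z m -> x = y.
Proof.
move=> Exz Eyz' zz' xy xz; apply: flimit_ext => n.
have xy_up j : set_val x (j + m) = set_val y (j + m).
  apply: (monotone_fibre_edge_uniq (@F_acyclic (j + m)) (@bond_monotone m j) xz
            _ _ _ _ (Exz (j + m)) (Eyz' (j + m)));
  by rewrite flimit_coord_bond ?xy ?zz'.
by apply: flimit_coord_eq_le (xy_up n) _; rewrite leq_addr.
Qed.

Lemma flimit_endpoint (e : flimit f) N :
  (forall m, (N <= m)%N -> tg_endpoint (@dedge (F m)) (set_val e m)) ->
  tg_endpoint (@lim_edge F f) e.
Proof.
move=> He H EH g [[[_ EHsym] _ _ _ _] Hconn _] [ginj gcont _ gedge] [h0 gh0].
exists h0; split => //; apply/tconnectedP => -[A [B sepAB]].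
have [[_ AB0 [a Aa] [b Bb]] _] := sepAB.
have away c : c <> h0 -> exists n, set_val (g c) n <> set_val e n.
  by move=> ch0; apply: flimit_neq_coord; rewrite -gh0 => /ginj.
have [na Hna] := away a (tseparation_subl sepAB Aa).
have [nb Hnb] := away b (tseparation_subl (tseparation_sym EHsym sepAB) Bb).
pose m := (N + na + nb)%N.
have neq_m c n : (n <= m)%N -> set_val (g c) n <> set_val e n -> set_val (g c) m <> set_val e m.
  by move=> nm + cm; apply; apply: flimit_coord_eq_le cm nm.
have nWa : set_val (g a) m <> set_val e m.
  by apply: neq_m Hna; rewrite /m -addnA addnCA leq_addr.
have nWb : set_val (g b) m <> set_val e m by apply: neq_m Hnb; rewrite /m leq_addl.
pose W := [set h : H | set_val (g h) m = set_val e m].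
have [oW clW] : open W /\ closed W.
  apply: discrete_fibre_clopen => h.
  apply: (@continuous_comp _ _ _ g (fun x : flimit f => set_val x m : dgraph (F m))).
    exact: gcont.
  exact: continuous_flimit_coord.
have Wh0 : W h0 by rewrite /W /= gh0.
have [x [z [Ax nWx Wz Exz]]] := tseparation_edge_into_clopen Hconn sepAB oW clW Wh0 Aa nWa.
have [y [z' [By nWy Wz' Eyz']]] :=
  tseparation_edge_into_clopen Hconn (tseparation_sym EHsym sepAB) oW clW Wh0 Bb nWb.
have [{}Exz {}Eyz'] := conj ((gedge x z).2 Exz) ((gedge y z').2 Eyz').
have Ex_m : gE (set_val e m) (set_val (g x) m) by rewrite -Wz gE_sym; exact: Exz.
have Ey_m : gE (set_val e m) (set_val (g y) m) by rewrite -Wz' gE_sym; exact: Eyz'.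
have xy_m : set_val (g x) m = set_val (g y) m.
  have Nm : (N <= m)%N by rewrite /m -addnA leq_addr.
  by apply: (endpoint_neighbour_uniq (@F_acyclic m) (He m Nm) Ex_m Ey_m); apply/eqP.
have zz'_m : set_val (g z) m = set_val (g z') m by rewrite Wz Wz'.
have /ginj xy : g x = g y.
  by apply: (flimit_edge_fibre_uniq Exz Eyz' zz'_m xy_m); rewrite Wz; apply/eqP.
have : (A `&` B) x by split; rewrite // xy.
by rewrite AB0.
Qed.
End InverseLimit.

Lemma fraisse_bond_dist (member : FinGraph -> Prop) (dist : dist_t)
    (F : nat -> FinGraph) (f : forall n, F n.+1 -> F n) :
  proj_fraisse_family member dist -> (forall n, dist (F n) (F n.+1) (f n)) ->
  forall m j, dist (F m) (F (j + m)) (@bond F f m j).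
Proof.
move=> [Hepi [_ Hid Hcomp _ _]] Hfn m; elim=> [|j IH].
  by apply: Hid; have [] := Hepi _ _ _ (Hfn m).
exact: Hcomp IH (Hfn (j + m)).
Qed.

Theorem mainTheorem13
  (member : FinGraph -> Prop) (dist : dist_t)
  (Hfam : proj_fraisse_family member dist)
  (Htree : forall A, member A -> is_tree A)
  (Hdist : forall (A B : FinGraph) (g : B -> A), dist A B g ->
             gmonotone g /\ weakly_coherent g)
  (Hsplit : allows_splitting member dist)
  (F : nat -> FinGraph) (f : forall n, F n.+1 -> F n)
  (Hseq : @fraisse_sequence member dist F f)
  (e : flimit f)
  (N : nat)
  (HN : forall m, (N <= m)%N -> tg_endpoint (@dedge (F m)) (set_val e m)) :
  tg_endpoint (@lim_edge F f) e.
Proof.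
have [Hfn _ _] := Hseq.
have F_tree n : is_tree (F n).
  by apply: Htree; have [Hepi _] := Hfam; have [] := Hepi _ _ _ (Hfn n).
apply: (flimit_endpoint _ _ HN) => [n | m j].
  by case: (F_tree n).
by have [] := Hdist _ _ _ (fraisse_bond_dist Hfam Hfn m j).
Qed.
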